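(* Let $k>l\ge0$ be integers, $\xi\in\mathbb{C}$, $f:\mathbb{N}\to[0,\infty)$, and $A=\xi(a^\dagger)^ka^l+\xi^*(a^\dagger)^la^k+f(a^\dagger a)$ with domain $\mathcal{D}_0$. Assume there exist $\kappa\ge2$ and $N\in\mathbb{N}$ such that $f(n)\ge\kappa|\xi|\beta^{kl}_n$ for all $n\ge N$. Then $A$ is essentially self-adjoint. In particular, if $\kappa>2$, then $A$ is bounded from below by $-2|\xi|\beta^{kl}_{N-1}\kappa/(\kappa-2)$, i.e. $\langle\psi,A\psi\rangle\ge-\frac{2|\xi|\beta^{kl}_{N-1}\kappa}{\kappa-2}\|\psi\|^2$ for all $\psi\in\mathcal{D}_0$.
   Context: $\mathbb{N}=\{0,1,2,\dots\}$. $\mathcal{H}$ is a separable complex Hilbert space with orthonormal basis $(\phi_n)_{n\in\mathbb{N}}$; $\mathcal{D}_0$ is the set of finite linear combinations of the $\phi_n$. The operators $a,a^\dagger$ have domain $\mathcal{D}_0$ and act by $a\phi_n=\sqrt{n}\,\phi_{n-1}$ ($a\phi_0=0$), $a^\dagger\phi_n=\sqrt{n+1}\,\phi_{n+1}$, extended linearly. $f(a^\dagger a)$ has domain $\mathcal{D}_0$ and $f(a^\dagger a)\phi_n=f(n)\phi_n$. For integers $x$ and $s\ge0$, $(x,s)=x(x+1)\cdots(x+s-1)$ ($=1$ if $s=0$), with the convention $(x,s)=0$ whenever $x$ is a negative integer; for integers $n$ and $k,l\ge0$, $\beta^{kl}_n=\sqrt{(n-l+1,l)(n-l+1,k)}$.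 *)

(* H is realized concretely as l^2(N) (coefficient
   sequences w.r.t. the orthonormal basis phi_n). *)
From Stdlib Require Import Reals ZArith Lra.
From Coquelicot Require Import Coquelicot.
Open Scope R_scope.

Definition vec := nat -> C.

Definition l2 (u : vec) : Prop := ex_series (fun n => (Cmod (u n))^2).

Definition nrm2 (u : vec) : R := Series (fun n => (Cmod (u n))^2).

Definition inner (u v : vec) : C :=
  (Series (fun n => Re (Cmult (Cconj (u n)) (v n))),
   Series (fun n => Im (Cmult (Cconj (u n)) (v n)))).

(* D_0 : finite linear combinations of the phi_n *)
Definition D0 (u : vec) : Prop := exists M : nat, forall n, (M <= n)%nat -> u n = 0%C.

(* a phi_n = sqrt n phi_{n-1}, a^dag phi_n = sqrt(n+1) phi_{n+1}, in coefficients *)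
Definition a_op (u : vec) : vec := fun n => Cmult (RtoC (sqrt (INR (S n)))) (u (S n)).
Definition adag_op (u : vec) : vec := fun n =>
  match n with O => 0%C | S m => Cmult (RtoC (sqrt (INR n))) (u m) end.

Definition A_op (k l : nat) (xi : C) (f : nat -> R) (u : vec) : vec := fun n =>
  Cplus (Cplus (Cmult xi (Nat.iter k adag_op (Nat.iter l a_op u) n))
               (Cmult (Cconj xi) (Nat.iter l adag_op (Nat.iter k a_op u) n)))
        (Cmult (RtoC (f n)) (u n)).

(* operators are represented by their graphs (relations on vectors) *)
Definition graph := vec -> vec -> Prop.

Definition graph_of_A (k l : nat) (xi : C) (f : nat -> R) : graph :=
  fun u w => D0 u /\ w = A_op k l xi f u.

Definition converges (x : nat -> vec) (v : vec) : Prop :=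
  is_lim_seq (fun j => nrm2 (fun n => Cminus (x j n) (v n))) 0.

Definition closure (G : graph) : graph := fun v w =>
  l2 v /\ l2 w /\ exists x y : nat -> vec,
    (forall j, G (x j) (y j)) /\ converges x v /\ converges y w.

Definition adjoint (G : graph) : graph := fun v w =>
  l2 v /\ l2 w /\ forall x y, G x y -> inner v y = inner w x.

Definition self_adjoint (G : graph) : Prop := forall v w, G v w <-> adjoint G v w.

Definition essentially_self_adjoint (G : graph) : Prop := self_adjoint (closure G).

(* Pochhammer symbol (x,s) with the convention (x,s)=0 for negative integer x *)
Definition poch (x : Z) (s : nat) : R :=
  if Z.ltb x 0 then 0
  else List.fold_right Rmult 1 (List.map (fun i => IZR (x + Z.of_nat i)) (List.seq 0 s)).

Definition beta (k l : nat) (n : Z) : R :=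
  sqrt (poch (n - Z.of_nat l + 1) l * poch (n - Z.of_nat l + 1) k).

(* In the basis (phi_n), A is the banded matrix
     (A u)(n) = xi beta(n-d) u(n-d) + xi^* beta(n) u(n+d) + f(n) u(n),   d = k - l,
   where beta = beta^{kl} is nondecreasing and vanishes below l.  As f >= kappa |xi| beta >= 2 |xi| beta
   from N on, every row is dominated by its diagonal up to c = 2 |xi| beta(N-1):
   |xi| (beta(n) + beta(n-d)) <= f(n) + c.  This gives <psi, A psi> >= -c |psi|^2, and T = A + c + 1
   satisfies <x, T x> >= |x|^2, hence |x| <= |T x|, on D_0.
   Row dominance also forces |z(n)| <= |z(n+d)| for a square-summable formal solution of T z = 0,
   so z = 0; by the projection theorem T(D_0) is dense.  Now if (v, w) is in the adjoint of the
   closure, then w = A v formally; choosing x_j in D_0 with T x_j -> w + (c+1) v, coercivity makes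
   (x_j) Cauchy, its limit u solves T (u - v) = 0, so x_j -> v and A x_j -> w.  The converse inclusion
   (the closure is symmetric) holds for every banded matrix. *)

From Stdlib Require Import Reals ZArith Lra Lia FunctionalExtensionality Classical IndefiniteDescription.
From Coquelicot Require Import Coquelicot.
Open Scope R_scope.

Ltac C_components :=
  repeat match goal with
         | |- forall z : C, _ => let x := fresh "x" in let y := fresh "y" in intros [x y]
         | |- forall _, _ => intro
         end;
  unfold Cminus, Cplus, Cmult, Cconj, Copp, RtoC, Re, Im; simpl; f_equal; ring.

Lemma Cmod_sq z : Cmod z ^ 2 = Re z ^ 2 + Im z ^ 2.
Proof. unfold Cmod. rewrite pow2_sqrt; [reflexivity | nra]. Qed.

Lemma Cmod_RtoC_mult (r : R) (z : C) : 0 <= r -> Cmod (r * z)%C = r * Cmod z.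
Proof. intros Hr. rewrite Cmod_mult, Cmod_R, Rabs_pos_eq by exact Hr. reflexivity. Qed.

Lemma Re_sq_le_Cmod2 z : Re z ^ 2 <= Cmod z ^ 2.
Proof. rewrite Cmod_sq. pose proof (pow2_ge_0 (Im z)). lra. Qed.

Lemma Im_sq_le_Cmod2 z : Im z ^ 2 <= Cmod z ^ 2.
Proof. rewrite Cmod_sq. pose proof (pow2_ge_0 (Re z)). lra. Qed.

Lemma im_le_Cmod z : Rabs (Im z) <= Cmod z.
Proof. eapply Rle_trans; [apply Rmax_r | apply Rmax_Cmod]. Qed.

Lemma Re_conj_mult_le (a b : C) : Re (Cconj a * b)%C <= (Cmod a ^ 2 + Cmod b ^ 2) / 2.
Proof.
  pose proof (re_le_Cmod (Cconj a * b)%C) as H. rewrite Cmod_mult, Cmod_conj in H.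
  apply Rabs_le_between in H. pose proof (pow2_ge_0 (Cmod a - Cmod b)). nra.
Qed.

Lemma Cmod2_add_le a b : Cmod (a + b)%C ^ 2 <= 2 * Cmod a ^ 2 + 2 * Cmod b ^ 2.
Proof.
  rewrite !Cmod_sq. destruct a as [a1 a2], b as [b1 b2]; simpl.
  pose proof (pow2_ge_0 (a1 - b1)); pose proof (pow2_ge_0 (a2 - b2)). nra.
Qed.

Lemma Cmod2_sub_le a b : Cmod (a - b)%C ^ 2 <= 2 * Cmod a ^ 2 + 2 * Cmod b ^ 2.
Proof.
  rewrite !Cmod_sq. destruct a as [a1 a2], b as [b1 b2]; simpl.
  pose proof (pow2_ge_0 (a1 + b1)); pose proof (pow2_ge_0 (a2 + b2)). nra.
Qed.

Lemma Re_conj_mult_ge (a c w : C) (beta : R) : 0 <= beta ->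
  - (beta * Cmod w) * (Cmod a ^ 2 + Cmod c ^ 2) <= 2 * Re (Cconj a * (w * (beta * c)))%C.
Proof.
  intros Hbeta. pose proof (re_le_Cmod (Cconj a * (w * (beta * c)))%C) as H.
  rewrite !Cmod_mult, Cmod_conj, Cmod_R, (Rabs_pos_eq beta Hbeta) in H.
  apply Rabs_le_between in H. destruct H as [H _].
  pose proof (Cmod_ge_0 a). pose proof (Cmod_ge_0 c). pose proof (Cmod_ge_0 w).
  assert (2 * (Cmod a * Cmod c) <= Cmod a ^ 2 + Cmod c ^ 2)
    by (pose proof (pow2_ge_0 (Cmod a - Cmod c)); nra).
  assert (0 <= beta * Cmod w) by nra.
  nra.
Qed.

(** * Finite sums and series *)

Fixpoint fsum (a : nat -> R) (K : nat) : R :=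
  match K with O => 0 | S K' => fsum a K' + a K' end.

Definition csum (a : nat -> C) (K : nat) : C :=
  (fsum (fun n => Re (a n)) K, fsum (fun n => Im (a n)) K).

Lemma fsum_ext a b K : (forall n, (n < K)%nat -> a n = b n) -> fsum a K = fsum b K.
Proof.
  induction K as [|K IH]; intros H; simpl; [reflexivity|].
  rewrite IH by (intros; apply H; lia). rewrite H by lia. reflexivity.
Qed.

Lemma fsum_plus a b K : fsum (fun n => a n + b n) K = fsum a K + fsum b K.
Proof. induction K as [|K IH]; simpl; [lra | rewrite IH; lra]. Qed.

Lemma fsum_scal c a K : fsum (fun n => c * a n) K = c * fsum a K.
Proof. induction K as [|K IH]; simpl; [lra | rewrite IH; lra]. Qed.

Lemma fsum_minus a b K : fsum (fun n => a n - b n) K = fsum a K - fsum b K.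
Proof. induction K as [|K IH]; simpl; [lra | rewrite IH; lra]. Qed.

Lemma fsum_le a b K : (forall n, (n < K)%nat -> a n <= b n) -> fsum a K <= fsum b K.
Proof.
  induction K as [|K IH]; intros H; simpl; [lra|].
  apply Rplus_le_compat; [apply IH; intros; apply H | apply H]; lia.
Qed.

Lemma fsum_nonneg a K : (forall n, 0 <= a n) -> 0 <= fsum a K.
Proof. intros H. induction K as [|K IH]; simpl; [lra | specialize (H K); lra]. Qed.

Lemma fsum_tail a K1 K2 :
  (K1 <= K2)%nat -> (forall n, (K1 <= n)%nat -> a n = 0) -> fsum a K2 = fsum a K1.
Proof. intros HK Ha. induction HK as [|K2 HK IH]; [reflexivity|]. simpl. rewrite IH, Ha by lia. lra. Qed.

Lemma fsum_shift (g : nat -> R) d K : (d <= K)%nat ->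
  fsum (fun m => if (d <=? m)%nat then g (m - d)%nat else 0) K = fsum g (K - d).
Proof.
  intros HK. replace K with (K - d + d)%nat at 1 by lia. generalize (K - d)%nat as K'. clear HK.
  induction K' as [|K' IH]; simpl.
  - rewrite fsum_ext with (b := fun _ => 0).
    + induction d; simpl; lra.
    + intros n Hn. destruct (Nat.leb_spec d n); [lia | reflexivity].
  - rewrite IH. destruct (Nat.leb_spec d (K' + d)); [|lia].
    replace (K' + d - d)%nat with K' by lia. reflexivity.
Qed.

Lemma fsum_lim (a : nat -> nat -> R) (b : nat -> R) K :
  (forall m, is_lim_seq (fun j => a j m) (b m)) -> is_lim_seq (fun j => fsum (a j) K) (fsum b K).
Proof.
  intros H. induction K as [|K IH]; simpl.
  - apply is_lim_seq_const.
  - apply (is_lim_seq_plus' _ _ (fsum b K) (b K)); [exact IH | apply H].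
Qed.

Lemma csum_ext a b K : (forall n, (n < K)%nat -> a n = b n) -> csum a K = csum b K.
Proof. intros H. unfold csum. f_equal; apply fsum_ext; intros n Hn; rewrite H by exact Hn; reflexivity. Qed.

Lemma csum_plus a b K : csum (fun n => a n + b n)%C K = (csum a K + csum b K)%C.
Proof. unfold csum, Cplus. simpl. f_equal; apply fsum_plus. Qed.

Lemma fsum_single a n0 K : (forall m, m <> n0 -> a m = 0) -> fsum a K = if (n0 <? K)%nat then a n0 else 0.
Proof.
  intros Ha. induction K as [|K IH]; [reflexivity|]. simpl. rewrite IH.
  destruct (Nat.ltb_spec n0 K), (Nat.ltb_spec n0 (S K)); try lia.
  - rewrite (Ha K) by lia. ring.
  - replace K with n0 by lia. ring.
  - rewrite (Ha K) by lia. ring.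
Qed.

Lemma csum_conj a K : csum (fun m => Cconj (a m)) K = Cconj (csum a K).
Proof.
  unfold csum, Cconj. simpl. f_equal.
  transitivity (-1 * fsum (fun n => Im (a n)) K); [|ring].
  rewrite <- fsum_scal. apply fsum_ext. intros n _. unfold Im. simpl. ring.
Qed.

Lemma fsum_lag (a : nat -> R) d K : (d <= K)%nat -> (forall p, (K - d <= p)%nat -> a p = 0) ->
  fsum (fun m => if (d <=? m)%nat then a (m - d)%nat else 0) K = fsum a K.
Proof. intros HK Ha. rewrite fsum_shift by exact HK. symmetry. apply fsum_tail; [lia | exact Ha]. Qed.

Lemma csum_lag (a : nat -> C) d K : (d <= K)%nat -> (forall p, (K - d <= p)%nat -> a p = 0%C) ->
  csum (fun m => if (d <=? m)%nat then a (m - d)%nat else 0%C) K = csum a K.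
Proof.
  intros HK Ha. unfold csum. f_equal;
    [rewrite <- (fsum_lag (fun p => Re (a p)) d K HK) | rewrite <- (fsum_lag (fun p => Im (a p)) d K HK)];
    try (apply fsum_ext; intros m _; destruct (d <=? m)%nat; reflexivity);
    intros p Hp; rewrite Ha by exact Hp; reflexivity.
Qed.

Lemma sum_n_fsum a n : sum_n a n = fsum a (S n).
Proof. induction n as [|n IH]; simpl; [rewrite sum_O; lra | rewrite sum_Sn, IH; reflexivity]. Qed.

Lemma is_series_fin a K : (forall n, (K <= n)%nat -> a n = 0) -> is_series a (fsum a K).
Proof.
  intros H. eapply filterlim_ext_loc; [|apply filterlim_const].
  exists K. intros n Hn. rewrite sum_n_fsum. symmetry. apply fsum_tail; [lia | exact H].
Qed.

Lemma Series_fin a K : (forall n, (K <= n)%nat -> a n = 0) -> Series a = fsum a K.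
Proof. intros H. apply is_series_unique, is_series_fin, H. Qed.

Lemma ex_series_fin a K : (forall n, (K <= n)%nat -> a n = 0) -> ex_series a.
Proof. intros H. eexists. apply is_series_fin, H. Qed.

Lemma ex_series_lin (p q : R) a b : ex_series a -> ex_series b -> ex_series (fun n => p * a n + q * b n).
Proof.
  intros Ha Hb.
  apply (ex_series_plus (V := R_NormedModule)); apply (ex_series_scal_l (V := R_NormedModule)); assumption.
Qed.

Lemma ex_series_nonneg_le a b : (forall n, 0 <= a n <= b n) -> ex_series b -> ex_series a.
Proof.
  intros H Hb. apply (ex_series_le a b); [|exact Hb].
  intros n. unfold norm; simpl; unfold abs; simpl. rewrite Rabs_pos_eq; apply H.
Qed.

Lemma fsum_le_Series a K : (forall n, 0 <= a n) -> ex_series a -> fsum a K <= Series a.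
Proof.
  intros H E.
  set (t := fun n => if (n <? K)%nat then a n else 0).
  assert (Ht : Series t = fsum a K).
  { rewrite (Series_fin t K).
    - apply fsum_ext. intros n Hn. unfold t. destruct (Nat.ltb_spec n K); [reflexivity | lia].
    - intros n Hn. unfold t. destruct (Nat.ltb_spec n K); [lia | reflexivity]. }
  rewrite <- Ht. apply Series_le; [|exact E].
  intros n. unfold t. specialize (H n). destruct (n <? K)%nat; lra.
Qed.

Lemma Series_nonneg a : (forall n, 0 <= a n) -> ex_series a -> 0 <= Series a.
Proof. apply (fsum_le_Series a 0). Qed.

Lemma term_le_Series a n : (forall n, 0 <= a n) -> ex_series a -> a n <= Series a.
Proof.
  intros H E. eapply Rle_trans; [|apply (fsum_le_Series a (S n) H E)].
  simpl. pose proof (fsum_nonneg a n H). lra.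
Qed.

Lemma ex_series_bounded a B : (forall n, 0 <= a n) -> (forall K, fsum a K <= B) ->
  ex_series a /\ Series a <= B.
Proof.
  intros H HB.
  destruct (ex_finite_lim_seq_incr (sum_n a) B) as [s Hs].
  - intros n. rewrite sum_Sn. unfold plus; simpl. specialize (H (S n)). lra.
  - intros n. rewrite sum_n_fsum. apply HB.
  - split; [exists s; exact Hs|]. rewrite (is_series_unique _ _ Hs).
    apply (is_lim_seq_le (sum_n a) (fun _ => B) s B); auto.
    + intros n. rewrite sum_n_fsum. apply HB.
    + apply is_lim_seq_const.
Qed.

(** * Square-summable sequences *)

Definition vanishes_from (x : vec) (M : nat) : Prop := forall n, (M <= n)%nat -> x n = 0%C.

Lemma vanishes_from_mono x M M' : (M <= M')%nat -> vanishes_from x M -> vanishes_from x M'.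
Proof. intros H Hx n Hn. apply Hx. lia. Qed.

Lemma Cmod2_vanishes x M n : vanishes_from x M -> (M <= n)%nat -> Cmod (x n) ^ 2 = 0.
Proof. intros Hx Hn. rewrite Hx, Cmod_0 by exact Hn. ring. Qed.

Lemma l2_vanishes x M : vanishes_from x M -> l2 x.
Proof. intros Hx. apply (ex_series_fin _ M). intros n Hn. apply (Cmod2_vanishes x M n Hx Hn). Qed.

Lemma D0_l2 x : D0 x -> l2 x.
Proof. intros [M Hx]. apply (l2_vanishes x M Hx). Qed.

Lemma nrm2_vanishes x M : vanishes_from x M -> nrm2 x = fsum (fun n => Cmod (x n) ^ 2) M.
Proof. intros Hx. apply Series_fin. intros n Hn. apply (Cmod2_vanishes x M n Hx Hn). Qed.

Lemma nrm2_ext x y : (forall n, x n = y n) -> nrm2 x = nrm2 y.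
Proof. intros H. apply Series_ext. intros n. rewrite H. reflexivity. Qed.

Lemma l2_ext x y : (forall n, x n = y n) -> l2 x -> l2 y.
Proof. intros H Hx. eapply ex_series_ext; [|exact Hx]. intros n. simpl. rewrite H. reflexivity. Qed.

Lemma nrm2_nonneg x : l2 x -> 0 <= nrm2 x.
Proof. intros Hx. apply Series_nonneg; [intros; apply pow2_ge_0 | exact Hx]. Qed.

Lemma Cmod2_le_nrm2 x n : l2 x -> Cmod (x n) ^ 2 <= nrm2 x.
Proof.
  intros Hx. apply (term_le_Series (fun n => Cmod (x n) ^ 2)); [intros; apply pow2_ge_0 | exact Hx].
Qed.

Lemma l2_plus x y : l2 x -> l2 y -> l2 (fun n => x n + y n)%C.
Proof.
  intros Hx Hy. apply ex_series_nonneg_le with (fun n => 2 * Cmod (x n) ^ 2 + 2 * Cmod (y n) ^ 2).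
  - intros n. split; [apply pow2_ge_0 | apply Cmod2_add_le].
  - apply ex_series_lin; assumption.
Qed.

Lemma l2_minus x y : l2 x -> l2 y -> l2 (fun n => x n - y n)%C.
Proof.
  intros Hx Hy. apply ex_series_nonneg_le with (fun n => 2 * Cmod (x n) ^ 2 + 2 * Cmod (y n) ^ 2).
  - intros n. split; [apply pow2_ge_0 | apply Cmod2_sub_le].
  - apply ex_series_lin; assumption.
Qed.

Lemma l2_scal c x : l2 x -> l2 (fun n => c * x n)%C.
Proof.
  intros Hx. eapply ex_series_ext; [|apply (ex_series_scal_l (V := R_NormedModule) (Cmod c ^ 2) _ Hx)].
  intros n. simpl. rewrite Cmod_mult. unfold scal; simpl; unfold mult; simpl. ring.
Qed.

Lemma nrm2_scal c x : l2 x -> nrm2 (fun n => c * x n)%C = Cmod c ^ 2 * nrm2 x.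
Proof.
  intros Hx. unfold nrm2. rewrite <- Series_scal_l. apply Series_ext. intros n. rewrite Cmod_mult. ring.
Qed.

Lemma nrm2_minus_le x y : l2 x -> l2 y -> nrm2 (fun n => x n - y n)%C <= 2 * nrm2 x + 2 * nrm2 y.
Proof.
  intros Hx Hy. unfold nrm2. rewrite <- !Series_scal_l, <- Series_plus.
  - apply Series_le; [|apply ex_series_lin; assumption].
    intros n. split; [apply pow2_ge_0 | apply Cmod2_sub_le].
  - apply (ex_series_scal_l (V := R_NormedModule)); assumption.
  - apply (ex_series_scal_l (V := R_NormedModule)); assumption.
Qed.

Lemma parallelogram x y : l2 x -> l2 y ->
  nrm2 (fun n => x n - y n)%C + nrm2 (fun n => x n + y n)%C = 2 * nrm2 x + 2 * nrm2 y.
Proof.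
  intros Hx Hy. unfold nrm2.
  rewrite <- Series_plus by (first [apply l2_minus | apply l2_plus]; assumption).
  rewrite <- !Series_scal_l, <- Series_plus
    by (apply (ex_series_scal_l (V := R_NormedModule)); assumption).
  apply Series_ext. intros n. rewrite !Cmod_sq. destruct (x n), (y n); simpl. ring.
Qed.

Lemma nrm2_perturb x y K : l2 x -> vanishes_from y K ->
  nrm2 (fun n => x n - y n)%C = nrm2 x + fsum (fun n => Cmod (x n - y n)%C ^ 2 - Cmod (x n) ^ 2) K.
Proof.
  intros Hx Hy.
  assert (Hfin : forall n, (K <= n)%nat -> Cmod (x n - y n)%C ^ 2 - Cmod (x n) ^ 2 = 0).
  { intros n Hn. rewrite Hy by exact Hn. rewrite !Cmod_sq. destruct (x n); simpl. ring. }
  unfold nrm2. rewrite <- (Series_fin _ K Hfin).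
  rewrite <- Series_plus by (exact Hx || exact (ex_series_fin _ K Hfin)).
  apply Series_ext. intros n. ring.
Qed.

Lemma Rabs_lt_of_sq_lt x eps : 0 < eps -> x ^ 2 < eps * eps -> Rabs x < eps.
Proof. intros He Hx. unfold Rabs. destruct (Rcase_abs x); nra. Qed.

Lemma is_lim_seq_0_of_sq_le (a e : nat -> R) :
  (forall j, a j ^ 2 <= e j) -> is_lim_seq e 0 -> is_lim_seq a 0.
Proof.
  intros H E. apply is_lim_seq_spec in E. apply is_lim_seq_spec. intros [eps He].
  assert (Hp : 0 < eps * eps) by nra.
  destruct (E (mkposreal _ Hp)) as [J HJ]. exists J. intros j Hj. specialize (HJ j Hj). simpl in *.
  rewrite Rminus_0_r in *. apply Rabs_lt_of_sq_lt; [exact He|].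
  specialize (H j). apply Rabs_lt_between in HJ. lra.
Qed.

Lemma is_lim_seq_of_sub_0 (a : nat -> R) l : is_lim_seq (fun j => a j - l) 0 -> is_lim_seq a l.
Proof.
  intros H. apply is_lim_seq_ext with (fun j => (a j - l) + l); [intros; ring|].
  replace (Finite l) with (Rbar_plus 0 l) by (simpl; f_equal; ring).
  apply is_lim_seq_plus'; [exact H | apply is_lim_seq_const].
Qed.

Lemma is_lim_seq_inv_S : is_lim_seq (fun j => / (INR j + 1)) 0.
Proof.
  apply is_lim_seq_spec. intros [eps He]. destruct (archimed_cor1 eps He) as [J [HJ HJ0]].
  exists J. intros j Hj. simpl. rewrite Rminus_0_r.
  assert (0 < INR J) by (apply lt_0_INR; lia). assert (INR J <= INR j) by (apply le_INR; lia).
  rewrite Rabs_pos_eq by (apply Rlt_le, Rinv_0_lt_compat; lra).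
  apply Rle_lt_trans with (/ INR J); [apply Rinv_le_contravar; lra | exact HJ].
Qed.

Definition clim (z : nat -> C) (w : C) : Prop :=
  is_lim_seq (fun j => Re (z j)) (Re w) /\ is_lim_seq (fun j => Im (z j)) (Im w).

Lemma clim_const w : clim (fun _ => w) w.
Proof. split; apply is_lim_seq_const. Qed.

Lemma clim_ext z1 z2 w : (forall j, z1 j = z2 j) -> clim z1 w -> clim z2 w.
Proof. intros H [H1 H2]. split; eapply is_lim_seq_ext; eauto; intros j; simpl; rewrite H; reflexivity. Qed.

Lemma clim_unique z w1 w2 : clim z w1 -> clim z w2 -> w1 = w2.
Proof.
  intros [A B] [A' B']. apply is_lim_seq_unique in A, B, A', B'.
  destruct w1, w2; unfold Re, Im in *; simpl in *.
  rewrite A in A'; rewrite B in B'. injection A'; injection B'; intros; subst; reflexivity.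
Qed.

Lemma clim_plus z1 z2 w1 w2 : clim z1 w1 -> clim z2 w2 -> clim (fun j => z1 j + z2 j)%C (w1 + w2)%C.
Proof. intros [A B] [A' B']. split; apply is_lim_seq_plus'; assumption. Qed.

Lemma clim_minus z1 z2 w1 w2 : clim z1 w1 -> clim z2 w2 -> clim (fun j => z1 j - z2 j)%C (w1 - w2)%C.
Proof. intros [A B] [A' B']. split; apply is_lim_seq_minus'; assumption. Qed.

Lemma clim_mult_l c z w : clim z w -> clim (fun j => c * z j)%C (c * w)%C.
Proof.
  intros [A B].
  split; simpl; [apply is_lim_seq_minus' | apply is_lim_seq_plus'];
    apply is_lim_seq_mult'; auto using is_lim_seq_const.
Qed.

Lemma clim_conj z w : clim z w -> clim (fun j => Cconj (z j)) (Cconj w).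
Proof. intros [A B]. split; [exact A|]. apply (is_lim_seq_opp _ (Im w)). exact B. Qed.

Lemma clim_mult_r c z w : clim z w -> clim (fun j => z j * c)%C (w * c)%C.
Proof.
  intros H. rewrite Cmult_comm. eapply clim_ext; [|apply (clim_mult_l c z w H)].
  intros j. apply Cmult_comm.
Qed.

Lemma csum_lim (a : nat -> nat -> C) (b : nat -> C) K :
  (forall m, clim (fun j => a j m) (b m)) -> clim (fun j => csum (a j) K) (csum b K).
Proof.
  intros H. split; apply (fsum_lim (fun j m => _ (a j m))); intros m; apply H.
Qed.

Lemma Cmod2_lim z w : clim z w -> is_lim_seq (fun j => Cmod (z j) ^ 2) (Cmod w ^ 2).
Proof.
  intros [A B].
  assert (Hsq : forall u (l : R), is_lim_seq u l -> is_lim_seq (fun j => u j ^ 2) (l ^ 2)).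
  { intros u l Hu. simpl. rewrite Rmult_1_r.
    eapply is_lim_seq_ext; [|apply (is_lim_seq_mult' _ _ _ _ Hu Hu)]. intros j; simpl; ring. }
  eapply is_lim_seq_ext; [intros j; symmetry; apply Cmod_sq|]. rewrite Cmod_sq.
  apply is_lim_seq_plus'; apply Hsq; assumption.
Qed.

Lemma converges_clim (x : nat -> vec) v : (forall j, l2 (x j)) -> l2 v -> converges x v ->
  forall n, clim (fun j => x j n) (v n).
Proof.
  intros Hx Hv H n.
  assert (Hd : forall j, Cmod (x j n - v n)%C ^ 2 <= nrm2 (fun m => x j m - v m)%C)
    by (intros j; apply (Cmod2_le_nrm2 (fun m => x j m - v m)%C), l2_minus; auto).
  split; apply is_lim_seq_of_sub_0; refine (is_lim_seq_0_of_sq_le _ _ _ H); intros j;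
    eapply Rle_trans; try apply Hd.
  - apply (Re_sq_le_Cmod2 (x j n - v n)%C).
  - apply (Im_sq_le_Cmod2 (x j n - v n)%C).
Qed.

Lemma converges_const x : converges (fun _ => x) x.
Proof.
  unfold converges. eapply is_lim_seq_ext; [|apply is_lim_seq_const]. intros j. simpl.
  rewrite (nrm2_vanishes _ 0); [reflexivity|]. intros n _. simpl. ring.
Qed.

Lemma converges_sub_scal (y x : nat -> vec) h v (c : C) :
  (forall j, l2 (y j)) -> (forall j, l2 (x j)) -> l2 h -> l2 v -> converges y h -> converges x v ->
  converges (fun j n => y j n - c * x j n)%C (fun n => h n - c * v n)%C.
Proof.
  intros Hy Hx Hh Hv Hyh Hxv.
  apply is_lim_seq_le_le with (fun _ => 0)
    (fun j => 2 * nrm2 (fun n => y j n - h n)%C + 2 * (Cmod c ^ 2 * nrm2 (fun n => x j n - v n)%C)).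
  - intros j. cbv beta. split.
    + apply nrm2_nonneg, l2_minus; apply l2_minus; try apply l2_scal; auto.
    + rewrite (nrm2_ext _ (fun n => (y j n - h n) - c * (x j n - v n))%C) by (intros n; ring).
      rewrite <- nrm2_scal by (apply l2_minus; auto).
      apply nrm2_minus_le; [apply l2_minus | apply l2_scal, l2_minus]; auto.
  - apply is_lim_seq_const.
  - replace (Finite 0) with (Finite (2 * 0 + 2 * (Cmod c ^ 2 * 0))) by (f_equal; ring).
    apply is_lim_seq_plus'; apply is_lim_seq_mult'; try apply is_lim_seq_const; [exact Hyh|].
    apply is_lim_seq_mult'; [apply is_lim_seq_const | exact Hxv].
Qed.

Lemma mult_le_amgm p q t : 0 < t -> p * q <= (t * p ^ 2 + q ^ 2 / t) / 2.
Proof.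
  intros Ht.
  assert (E : (t * p ^ 2 + q ^ 2 / t) / 2 - p * q = (t * p - q) ^ 2 / (2 * t)) by (field; lra).
  assert (0 <= (t * p - q) ^ 2 / (2 * t)) by (apply Rdiv_le_0_compat; [apply pow2_ge_0 | lra]).
  lra.
Qed.

Lemma is_lim_seq_0_of_amgm_bound (u B : nat -> R) (A : R) : 0 <= A -> is_lim_seq B 0 ->
  (forall j t, 0 < t -> Rabs (u j) <= (t * A + B j / t) / 2) -> is_lim_seq u 0.
Proof.
  intros HA HB H. apply is_lim_seq_spec in HB. apply is_lim_seq_spec. intros [eps He].
  set (t := eps / (A + 1)). assert (Ht : 0 < t) by (unfold t; apply Rdiv_lt_0_compat; lra).
  assert (Hp : 0 < eps * t) by nra.
  destruct (HB (mkposreal _ Hp)) as [J HJ]. exists J. intros j Hj. specialize (HJ j Hj). simpl in *.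
  rewrite Rminus_0_r in *. apply Rabs_lt_between in HJ. specialize (H j t Ht).
  assert (B j / t < eps) by (apply Rmult_lt_reg_r with t; [exact Ht|]; field_simplify; lra).
  assert (t * A < eps) by (unfold t; apply Rmult_lt_reg_r with (A + 1); [lra|]; field_simplify; nra).
  lra.
Qed.

Section Pairing.

Variable p : C -> R.
Hypothesis p_le_Cmod : forall z, Rabs (p z) <= Cmod z.
Hypothesis p_sub : forall z w, p (z - w)%C = p z - p w.

Let pairing (a y : vec) (n : nat) : R := p (Cconj (a n) * y n)%C.

Lemma pairing_le a y n t : 0 < t -> Rabs (pairing a y n) <= (t * Cmod (a n) ^ 2 + Cmod (y n) ^ 2 / t) / 2.
Proof.
  intros Ht. eapply Rle_trans; [apply p_le_Cmod|].
  rewrite Cmod_mult, Cmod_conj. apply mult_le_amgm, Ht.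
Qed.

Lemma ex_series_pairing a y : l2 a -> l2 y ->
  ex_series (fun n => Rabs (pairing a y n)) /\ ex_series (pairing a y).
Proof.
  intros Ha Hy.
  assert (E : ex_series (fun n => Rabs (pairing a y n))).
  { apply ex_series_nonneg_le with (fun n => / 2 * Cmod (a n) ^ 2 + / 2 * Cmod (y n) ^ 2).
    - intros n. split; [apply Rabs_pos|].
      eapply Rle_trans; [apply (pairing_le a y n 1 Rlt_0_1) | right; field].
    - apply ex_series_lin; assumption. }
  split; [exact E | apply ex_series_Rabs, E].
Qed.

Lemma Series_pairing_le a y t : l2 a -> l2 y -> 0 < t ->
  Rabs (Series (pairing a y)) <= (t * nrm2 a + nrm2 y / t) / 2.
Proof.
  intros Ha Hy Ht. destruct (ex_series_pairing a y Ha Hy) as [E _].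
  eapply Rle_trans; [apply Series_Rabs, E|].
  replace ((t * nrm2 a + nrm2 y / t) / 2)
    with (Series (fun n => t / 2 * Cmod (a n) ^ 2 + / t / 2 * Cmod (y n) ^ 2)).
  - apply Series_le; [|apply ex_series_lin; assumption].
    intros n. split; [apply Rabs_pos|].
    eapply Rle_trans; [apply (pairing_le a y n t Ht) | right; field; lra].
  - rewrite Series_plus, !Series_scal_l by (apply (ex_series_scal_l (V := R_NormedModule)); assumption).
    unfold nrm2. field. lra.
Qed.

Lemma Series_pairing_lim a (b : nat -> vec) c : l2 a -> (forall j, l2 (b j)) -> l2 c ->
  converges b c -> is_lim_seq (fun j => Series (pairing a (b j))) (Series (pairing a c)).
Proof.
  intros Ha Hb Hc H. apply is_lim_seq_of_sub_0.
  apply (is_lim_seq_0_of_amgm_bound _ _ (nrm2 a) (nrm2_nonneg a Ha) H).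
  intros j t Ht.
  rewrite <- Series_minus by (apply ex_series_pairing; auto).
  rewrite <- (Series_ext (pairing a (fun m => b j m - c m)%C)).
  - apply Series_pairing_le; auto. apply l2_minus; auto.
  - intros n. unfold pairing. rewrite <- p_sub. f_equal. ring.
Qed.

End Pairing.

Lemma inner_lim a (b : nat -> vec) c : l2 a -> (forall j, l2 (b j)) -> l2 c ->
  converges b c -> clim (fun j => inner a (b j)) (inner a c).
Proof.
  intros Ha Hb Hc H.
  assert (Re_sub : forall z w, Re (z - w)%C = Re z - Re w) by (intros [] []; reflexivity).
  assert (Im_sub : forall z w, Im (z - w)%C = Im z - Im w) by (intros [] []; reflexivity).
  split; [apply (Series_pairing_lim Re re_le_Cmod Re_sub) | apply (Series_pairing_lim Im im_le_Cmod Im_sub)];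
    assumption.
Qed.

Definition l2_cauchy (x : nat -> vec) : Prop :=
  forall eps, 0 < eps -> exists J, forall i j, (J <= i)%nat -> (J <= j)%nat ->
    nrm2 (fun n => x i n - x j n)%C < eps.

Lemma l2_cauchy_clim (x : nat -> vec) : (forall j, l2 (x j)) -> l2_cauchy x ->
  forall n, exists w, clim (fun j => x j n) w.
Proof.
  intros Hx Hc n.
  assert (Hcoord : forall p : C -> R, (forall z, p z ^ 2 <= Cmod z ^ 2) ->
            (forall z w, p (z - w)%C = p z - p w) -> ex_finite_lim_seq (fun j => p (x j n))).
  { intros p Hp Hsub. apply ex_lim_seq_cauchy_corr. intros [eps He].
    destruct (Hc (eps * eps)) as [J HJ]; [nra|]. exists J. intros i j Hi Hj. simpl.
    rewrite <- Hsub. apply Rabs_lt_of_sq_lt; [exact He|].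
    eapply Rle_lt_trans; [apply Hp|]. eapply Rle_lt_trans; [|apply (HJ i j Hi Hj)].
    apply (Cmod2_le_nrm2 (fun m => x i m - x j m)%C), l2_minus; auto. }
  destruct (Hcoord Re Re_sq_le_Cmod2) as [r Hr]; [intros [] []; reflexivity|].
  destruct (Hcoord Im Im_sq_le_Cmod2) as [s Hs]; [intros [] []; reflexivity|].
  exists (r, s). split; assumption.
Qed.

Lemma l2_cauchy_tail (x : nat -> vec) u : (forall j, l2 (x j)) -> l2_cauchy x ->
  (forall n, clim (fun j => x j n) (u n)) ->
  forall eps, 0 < eps -> exists J, forall j, (J <= j)%nat ->
    l2 (fun n => x j n - u n)%C /\ nrm2 (fun n => x j n - u n)%C <= eps.
Proof.
  intros Hx Hc Hu eps He. destruct (Hc eps He) as [J HJ]. exists J. intros j Hj.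
  apply ex_series_bounded; [intros; apply pow2_ge_0|]. intros K.
  assert (Hlim : is_lim_seq (fun i => fsum (fun n => Cmod (x j n - x i n)%C ^ 2) K)
                   (fsum (fun n => Cmod (x j n - u n)%C ^ 2) K)).
  { apply (fsum_lim (fun i n => Cmod (x j n - x i n)%C ^ 2)). intros n.
    apply Cmod2_lim, clim_minus; [apply clim_const | apply Hu]. }
  refine (is_lim_seq_le_loc _ (fun _ => eps) _ eps _ Hlim (is_lim_seq_const eps)).
  exists J. intros i Hi. left. eapply Rle_lt_trans; [|apply (HJ j i Hj Hi)].
  apply (fsum_le_Series (fun n => Cmod (x j n - x i n)%C ^ 2));
    [intros; apply pow2_ge_0 | apply l2_minus; auto].
Qed.

Lemma l2_complete (x : nat -> vec) : (forall j, l2 (x j)) -> l2_cauchy x ->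
  exists u, l2 u /\ converges x u.
Proof.
  intros Hx Hc.
  destruct (functional_choice (fun n w => clim (fun j => x j n) w) (l2_cauchy_clim x Hx Hc)) as [u Hu].
  pose proof (l2_cauchy_tail x u Hx Hc Hu) as Htail.
  exists u. split.
  - destruct (Htail 1 Rlt_0_1) as [J HJ]. destruct (HJ J (le_n _)) as [HJu _].
    eapply l2_ext; [|apply (l2_minus _ _ (Hx J) HJu)]. intros n. simpl. ring.
  - apply is_lim_seq_spec. intros [eps He]. destruct (Htail (eps / 2)) as [J HJ]; [lra|].
    exists J. intros j Hj. destruct (HJ j Hj) as [Hl Hle]. pose proof (nrm2_nonneg _ Hl). simpl.
    rewrite Rminus_0_r, Rabs_pos_eq by lra. lra.
Qed.

(** * Best approximation by a subspace of finitely supported vectors *)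

Lemma exists_inf_approx {X : Type} (P : X -> Prop) (F : X -> R) :
  (exists x, P x) -> (forall x, P x -> 0 <= F x) ->
  exists m, (forall x, P x -> m <= F x) /\ (forall eps, 0 < eps -> exists x, P x /\ F x < m + eps).
Proof.
  intros [x0 Hx0] HF.
  set (E := fun y => exists x, P x /\ y = - F x).
  destruct (completeness E) as [M [Hub Hlub]].
  - exists 0. intros y [x [Hx ->]]. specialize (HF x Hx). lra.
  - exists (- F x0). exists x0. split; auto.
  - exists (- M). split.
    + intros x Hx. assert (E (- F x)) by (exists x; split; auto). specialize (Hub _ H). lra.
    + intros eps He. apply NNPP. intros Hn.
      assert (Hup : is_upper_bound E (M - eps)).
      { intros y [x [Hx ->]]. destruct (Rlt_dec (F x) (- M + eps)) as [Hl|Hl]; [|lra].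
        exfalso. apply Hn. exists x. split; auto. }
      specialize (Hlub _ Hup). lra.
Qed.

Lemma quad_nonneg_linear_zero P Y : 0 <= Y -> (forall t, 0 <= - 2 * t * P + t ^ 2 * Y) -> P = 0.
Proof.
  intros HY H. set (t := P / (Y + 1)). assert (Ht : P = t * (Y + 1)) by (unfold t; field; lra).
  specialize (H t). rewrite Ht in H. assert (t = 0) by nra. rewrite Ht, H0. ring.
Qed.

Lemma csum_orthogonal_of_min (r y : vec) K :
  (forall c : C, 0 <= fsum (fun n => Cmod (r n - c * y n)%C ^ 2 - Cmod (r n) ^ 2) K) ->
  csum (fun n => Cconj (r n) * y n)%C K = 0%C.
Proof.
  intros Hmin. set (Y := fsum (fun n => Cmod (y n) ^ 2) K).
  assert (HY : 0 <= Y) by (apply fsum_nonneg; intros; apply pow2_ge_0).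
  assert (HRe : fsum (fun n => Re (Cconj (r n) * y n)%C) K = 0).
  { apply (quad_nonneg_linear_zero _ Y HY). intros t. specialize (Hmin (RtoC t)).
    rewrite (fsum_ext _ (fun n => (- 2 * t) * Re (Cconj (r n) * y n)%C + t ^ 2 * Cmod (y n) ^ 2)) in Hmin.
    - rewrite fsum_plus, !fsum_scal in Hmin. exact Hmin.
    - intros n _. rewrite !Cmod_sq. destruct (r n), (y n). unfold Re, Im; simpl. ring. }
  assert (HIm : fsum (fun n => Im (Cconj (r n) * y n)%C) K = 0).
  { apply (quad_nonneg_linear_zero _ Y HY). intros t. specialize (Hmin (0, - t)). (* c = - i t *)
    rewrite (fsum_ext _ (fun n => (- 2 * t) * Im (Cconj (r n) * y n)%C + t ^ 2 * Cmod (y n) ^ 2)) in Hmin.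
    - rewrite fsum_plus, !fsum_scal in Hmin. exact Hmin.
    - intros n _. rewrite !Cmod_sq. destruct (r n), (y n). unfold Re, Im; simpl. ring. }
  unfold csum. rewrite HRe, HIm. reflexivity.
Qed.

Lemma inner_vanishes u y K : vanishes_from y K -> inner u y = csum (fun n => Cconj (u n) * y n)%C K.
Proof.
  intros Hy. unfold inner, csum.
  f_equal; apply Series_fin; intros n Hn; rewrite Hy by exact Hn;
    destruct (u n); unfold Re, Im; simpl; ring.
Qed.

Lemma l2_cauchy_of_le (a : nat -> vec) (e : nat -> R) : is_lim_seq e 0 ->
  (forall i j, nrm2 (fun n => a i n - a j n)%C <= 2 * e i + 2 * e j) -> l2_cauchy a.
Proof.
  intros He H eps Heps. apply is_lim_seq_spec in He.
  destruct (He (mkposreal (eps / 4) ltac:(lra))) as [J HJ].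
  exists J. intros i j Hi Hj. specialize (HJ i Hi) as Hei. specialize (HJ j Hj) as Hej. simpl in *.
  rewrite Rminus_0_r in *. apply Rabs_lt_between in Hei, Hej. specialize (H i j). lra.
Qed.

Section Projection.

Variable S : vec -> Prop.
Hypothesis S_D0 : forall y, S y -> D0 y.
Hypothesis S_lin : forall (a b : C) y z, S y -> S z -> S (fun n => a * y n + b * z n)%C.

Variable h : vec.
Hypothesis h_l2 : l2 h.

Let dist2 (y : vec) : R := nrm2 (fun n => h n - y n)%C.

Lemma dist2_l2 y : S y -> l2 (fun n => h n - y n)%C.
Proof. intros Hy. apply l2_minus; [exact h_l2 | apply D0_l2, S_D0, Hy]. Qed.

Variables (s : nat -> vec) (m : R).
Hypothesis s_S : forall j, S (s j).
Hypothesis m_le : forall y, S y -> m <= dist2 y.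
Hypothesis s_min : forall j, dist2 (s j) < m + / (INR j + 1).

Lemma minimizing_seq_cauchy : l2_cauchy (fun j n => h n - s j n)%C.
Proof.
  apply (l2_cauchy_of_le _ _ is_lim_seq_inv_S). intros i j.
  set (mid := fun n => (/ 2 * s i n + / 2 * s j n)%C).
  assert (Hmid : S mid) by (apply S_lin; apply s_S).
  assert (Hsum : nrm2 (fun n => (h n - s i n) + (h n - s j n))%C = 4 * dist2 mid).
  { unfold dist2. rewrite <- (nrm2_ext (fun n => 2 * (h n - mid n))%C).
    - rewrite nrm2_scal by (apply dist2_l2, Hmid). rewrite Cmod_R, Rabs_pos_eq by lra. ring.
    - intros n. unfold mid. field. }
  pose proof (parallelogram _ _ (dist2_l2 _ (s_S i)) (dist2_l2 _ (s_S j))) as Hpar.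
  pose proof (m_le mid Hmid). pose proof (s_min i). pose proof (s_min j). unfold dist2 in *.
  lra.
Qed.

Lemma minimizing_limit_orthogonal r : l2 r -> converges (fun j n => h n - s j n)%C r ->
  forall y, S y -> inner r y = 0%C.
Proof.
  intros Hr Hconv y Hy. destruct (S_D0 y Hy) as [K HK].
  rewrite (inner_vanishes r y K HK). apply csum_orthogonal_of_min. intros c.
  assert (HcK : vanishes_from (fun n => c * y n)%C K) by (intros n Hn; rewrite HK by exact Hn; ring).
  assert (Hj : forall j, - / (INR j + 1) <=
            fsum (fun n => Cmod (h n - s j n - c * y n)%C ^ 2 - Cmod (h n - s j n)%C ^ 2) K).
  { intros j.
    assert (Hsy : S (fun n => 1 * s j n + c * y n)%C) by (apply S_lin; auto).
    pose proof (m_le _ Hsy) as Hm. pose proof (s_min j) as Hs. unfold dist2 in *.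
    rewrite (nrm2_ext _ (fun n => (h n - s j n) - c * y n)%C) in Hm by (intros n; ring).
    rewrite (nrm2_perturb _ _ K (dist2_l2 _ (s_S j)) HcK) in Hm. lra. }
  assert (Hpt : forall n, clim (fun j => h n - s j n)%C (r n))
    by (apply converges_clim; auto; intros j; apply dist2_l2, s_S).
  assert (Hlow : is_lim_seq (fun j => - / (INR j + 1)) 0).
  { replace (Finite 0) with (Finite (- 0)) by (f_equal; ring).
    apply (is_lim_seq_opp _ 0), is_lim_seq_inv_S. }
  assert (Hlim : is_lim_seq
            (fun j => fsum (fun n => Cmod (h n - s j n - c * y n)%C ^ 2 - Cmod (h n - s j n)%C ^ 2) K)
            (fsum (fun n => Cmod (r n - c * y n)%C ^ 2 - Cmod (r n) ^ 2) K)).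
  { apply (fsum_lim (fun j n => Cmod (h n - s j n - c * y n)%C ^ 2 - Cmod (h n - s j n)%C ^ 2)).
    intros n. apply is_lim_seq_minus'; apply Cmod2_lim; [|apply Hpt].
    apply clim_minus; [apply Hpt | apply clim_const]. }
  exact (is_lim_seq_le _ _ _ _ Hj Hlow Hlim).
Qed.

End Projection.

Lemma dense_of_orthogonal_trivial (S : vec -> Prop) :
  (forall y, S y -> D0 y) -> S (fun _ => 0%C) ->
  (forall (a b : C) y z, S y -> S z -> S (fun n => a * y n + b * z n)%C) ->
  (forall r, l2 r -> (forall y, S y -> inner r y = 0%C) -> forall n, r n = 0%C) ->
  forall h, l2 h -> exists s : nat -> vec, (forall j, S (s j)) /\ converges s h.
Proof.
  intros S_D0 S_0 S_lin Hperp h Hh.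
  destruct (exists_inf_approx S (fun y => nrm2 (fun n => h n - y n)%C)) as [m [Hm Happ]].
  { exists (fun _ => 0%C). exact S_0. }
  { intros y Hy. apply nrm2_nonneg, (dist2_l2 S S_D0 h Hh y Hy). }
  destruct (functional_choice (fun j y => S y /\ nrm2 (fun n => h n - y n)%C < m + / (INR j + 1)))
    as [s Hs].
  { intros j. apply Happ, Rinv_0_lt_compat. pose proof (pos_INR j). lra. }
  assert (s_S : forall j, S (s j)) by (intros j; apply Hs).
  assert (s_min : forall j, nrm2 (fun n => h n - s j n)%C < m + / (INR j + 1)) by (intros j; apply Hs).
  destruct (l2_complete (fun j n => h n - s j n)%C) as [r [Hr Hconv]].
  { intros j. apply (dist2_l2 S S_D0 h Hh), s_S. }
  { apply (minimizing_seq_cauchy S S_D0 S_lin h Hh s m s_S Hm s_min). }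
  assert (Hr0 : forall n, r n = 0%C).
  { apply Hperp; [exact Hr|].
    exact (minimizing_limit_orthogonal S S_D0 S_lin h Hh s m s_S Hm s_min r Hr Hconv). }
  exists s. split; [exact s_S|].
  eapply is_lim_seq_ext; [|exact Hconv]. intros j. apply Series_ext. intros n.
  rewrite Hr0. replace (s j n - h n)%C with (- (h n - s j n - 0))%C by ring.
  rewrite Cmod_opp. reflexivity.
Qed.

(** * Banded operators *)

Definition lag (d : nat) (b : nat -> R) (n : nat) : R := if (d <=? n)%nat then b (n - d)%nat else 0.

Definition band_op (d : nat) (b : nat -> R) (xi : C) (g : nat -> R) (u : vec) : vec := fun n =>
  (xi * (if (d <=? n)%nat then b (n - d)%nat * u (n - d)%nat else 0)
   + Cconj xi * (b n * u (n + d)%nat) + g n * u n)%C.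

Definition band_graph (d : nat) (b : nat -> R) (xi : C) (g : nat -> R) : graph :=
  fun u w => D0 u /\ w = band_op d b xi g u.

Section Band.

Variables (d : nat) (b : nat -> R) (xi : C).

Lemma band_op_vanishes g x M : vanishes_from x M -> vanishes_from (band_op d b xi g x) (M + d).
Proof.
  intros Hx n Hn. unfold band_op. rewrite (Hx n), (Hx (n + d)%nat) by lia.
  destruct (Nat.leb_spec d n); [rewrite (Hx (n - d)%nat) by lia|]; ring.
Qed.

Lemma D0_band_op g x : D0 x -> D0 (band_op d b xi g x).
Proof. intros [M Hx]. exists (M + d)%nat. exact (band_op_vanishes g x M Hx). Qed.

Lemma band_op_lin g (a1 a2 : C) x y n :
  band_op d b xi g (fun m => a1 * x m + a2 * y m)%C n
  = (a1 * band_op d b xi g x n + a2 * band_op d b xi g y n)%C.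
Proof. unfold band_op. destruct (d <=? n)%nat; ring. Qed.

Lemma band_op_minus g x y n :
  band_op d b xi g (fun m => x m - y m)%C n = (band_op d b xi g x n - band_op d b xi g y n)%C.
Proof. unfold band_op. destruct (d <=? n)%nat; ring. Qed.

Lemma band_op_diag_shift g (c : R) u n :
  band_op d b xi (fun m => g m + c) u n = (band_op d b xi g u n + c * u n)%C.
Proof. unfold band_op. rewrite RtoC_plus. ring. Qed.

Lemma band_op_clim g (x : nat -> vec) u : (forall n, clim (fun j => x j n) (u n)) ->
  forall n, clim (fun j => band_op d b xi g (x j) n) (band_op d b xi g u n).
Proof.
  intros H n. unfold band_op.
  apply clim_plus; [apply clim_plus|]; apply clim_mult_l; [|apply clim_mult_l; apply H | apply H].
  destruct (d <=? n)%nat; [apply clim_mult_l, H | apply clim_const].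
Qed.

Let coupling (u x : vec) (m : nat) : C := (Cconj (u (m + d)%nat) * (xi * (b m * x m)))%C.

Let expanded_pairing (g : nat -> R) (u x : vec) (K : nat) : C :=
  (csum (coupling u x) K + csum (fun m => Cconj (coupling x u m)) K
   + csum (fun m => g m * (Cconj (u m) * x m)) K)%C.

Lemma band_op_pairing_r g u x M : vanishes_from x M ->
  csum (fun m => Cconj (u m) * band_op d b xi g x m)%C (M + d) = expanded_pairing g u x (M + d).
Proof.
  intros Hx. unfold expanded_pairing. rewrite <- (csum_lag (coupling u x) d) by
    (try lia; intros p Hp; unfold coupling; rewrite (Hx p) by lia; ring).
  rewrite <- !csum_plus. apply csum_ext. intros m _. unfold band_op, coupling.
  destruct (Nat.leb_spec d m).
  - replace (m - d + d)%nat with m by lia.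
    generalize (u m) (x m) (x (m - d)%nat) (x (m + d)%nat) (u (m - d)%nat) xi. C_components.
  - generalize (u m) (x m) (x (m + d)%nat) xi. C_components.
Qed.

Lemma band_op_pairing_l g u x M : vanishes_from x M ->
  csum (fun m => Cconj (band_op d b xi g u m) * x m)%C (M + d) = expanded_pairing g u x (M + d).
Proof.
  intros Hx. unfold expanded_pairing.
  rewrite <- (csum_lag (fun m => Cconj (coupling x u m)) d) by
    (try lia; intros p Hp; unfold coupling; rewrite (Hx (p + d)%nat) by lia;
     generalize (u p) xi; C_components).
  rewrite <- !csum_plus. apply csum_ext. intros m _. unfold band_op, coupling.
  destruct (Nat.leb_spec d m).
  - replace (m - d + d)%nat with m by lia.
    generalize (u m) (x m) (u (m - d)%nat) (u (m + d)%nat) (x (m - d)%nat) xi. C_components.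
  - generalize (u m) (x m) (u (m + d)%nat) xi. C_components.
Qed.

Lemma band_op_symmetric g u x M : vanishes_from x M ->
  csum (fun m => Cconj (u m) * band_op d b xi g x m)%C (M + d)
  = csum (fun m => Cconj (band_op d b xi g u m) * x m)%C (M + d).
Proof. intros Hx. rewrite band_op_pairing_r, band_op_pairing_l by exact Hx. reflexivity. Qed.

Lemma band_form_Im g x M : vanishes_from x M ->
  Im (csum (fun m => Cconj (x m) * band_op d b xi g x m)%C (M + d)) = 0.
Proof.
  intros Hx. set (z := csum (fun m => Cconj (x m) * band_op d b xi g x m)%C (M + d)).
  assert (Hz : Cconj z = z).
  { unfold z. rewrite <- csum_conj, (band_op_symmetric g x x M Hx).
    apply csum_ext. intros m _. rewrite Cmult_conj, Cconj_conj. apply Cmult_comm. }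
  destruct z as [p q]. unfold Cconj in Hz. simpl in *. injection Hz. unfold Im; simpl. lra.
Qed.

Hypothesis b_nonneg : forall n, 0 <= b n.

Lemma band_form_Re_ge g x M : vanishes_from x M ->
  fsum (fun n => (g n - Cmod xi * (b n + lag d b n)) * Cmod (x n) ^ 2) (M + d)
  <= Re (csum (fun m => Cconj (x m) * band_op d b xi g x m)%C (M + d)).
Proof.
  intros Hx. rewrite band_op_pairing_r by exact Hx. unfold expanded_pairing, coupling.
  set (w := fun p => Cmod xi * b p * Cmod (x (p + d)%nat) ^ 2).
  assert (Hlag : fsum (fun n => Cmod xi * lag d b n * Cmod (x n) ^ 2) (M + d) = fsum w (M + d)).
  { rewrite <- (fsum_lag w d (M + d)) by
      (try lia; intros p Hp; unfold w; rewrite (Cmod2_vanishes x M) by (auto; lia); ring).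
    apply fsum_ext. intros n _. unfold lag, w. destruct (Nat.leb_spec d n); [|ring].
    replace (n - d + d)%nat with n by lia. ring. }
  replace (fsum _ (M + d))
    with (fsum (fun n => g n * Cmod (x n) ^ 2 - Cmod xi * b n * Cmod (x n) ^ 2 - w n) (M + d))
    by (rewrite fsum_minus, <- Hlag, <- fsum_minus; apply fsum_ext; intros; ring).
  assert (Re_add : forall z1 z2 : C, Re (z1 + z2)%C = Re z1 + Re z2) by reflexivity.
  assert (Re_csum : forall a K, Re (csum a K) = fsum (fun n => Re (a n)) K) by reflexivity.
  rewrite !Re_add, !Re_csum, <- !fsum_plus. apply fsum_le. intros n _.
  pose proof (Re_conj_mult_ge (x (n + d)%nat) (x n) xi (b n) (b_nonneg n)).
  assert (Hdiag : Re (g n * (Cconj (x n) * x n))%C = g n * Cmod (x n) ^ 2)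
    by (rewrite Cmod_sq; destruct (x n); unfold Re, Im; simpl; ring).
  rewrite re_conj, Hdiag. unfold w. lra.
Qed.

Lemma band_op_quadratic_form g (c : R) psi :
  (forall n, Cmod xi * (b n + lag d b n) <= g n + c) -> D0 psi ->
  Im (inner psi (band_op d b xi g psi)) = 0 /\
  - c * nrm2 psi <= Re (inner psi (band_op d b xi g psi)).
Proof.
  intros Hrow [M Hpsi].
  rewrite (inner_vanishes psi _ (M + d) (band_op_vanishes g psi M Hpsi)).
  split; [exact (band_form_Im g psi M Hpsi)|].
  eapply Rle_trans; [|apply (band_form_Re_ge g psi M Hpsi)].
  rewrite (nrm2_vanishes psi (M + d)) by (apply (vanishes_from_mono psi M); [lia | exact Hpsi]).
  rewrite <- fsum_scal. apply fsum_le. intros n _.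
  specialize (Hrow n). pose proof (pow2_ge_0 (Cmod (psi n))). nra.
Qed.

Variable g : nat -> R.
Hypothesis g_dominant : forall n, Cmod xi * (b n + lag d b n) + 1 <= g n.

Lemma band_op_coercive x M : vanishes_from x M -> nrm2 x <= nrm2 (band_op d b xi g x).
Proof.
  intros Hx. set (K := (M + d)%nat).
  pose proof (band_form_Re_ge g x M Hx) as Hform. fold K in Hform.
  rewrite (nrm2_vanishes x K) by (apply (vanishes_from_mono x M); [unfold K; lia | exact Hx]).
  rewrite (nrm2_vanishes _ K) by apply band_op_vanishes, Hx.
  assert (H1 : fsum (fun n => Cmod (x n) ^ 2) K
               <= fsum (fun n => (g n - Cmod xi * (b n + lag d b n)) * Cmod (x n) ^ 2) K).
  { apply fsum_le. intros n _. specialize (g_dominant n). pose proof (pow2_ge_0 (Cmod (x n))). nra. }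
  assert (H2 : Re (csum (fun m => Cconj (x m) * band_op d b xi g x m)%C K)
               <= fsum (fun n => / 2 * Cmod (x n) ^ 2 + / 2 * Cmod (band_op d b xi g x n) ^ 2) K).
  { apply fsum_le. intros n _. eapply Rle_trans; [apply Re_conj_mult_le | right; field]. }
  rewrite fsum_plus, !fsum_scal in H2. lra.
Qed.

Lemma band_op_kernel_step z n : band_op d b xi g z n = 0%C ->
  ((d <= n)%nat -> Cmod (z (n - d)%nat) <= Cmod (z n)) -> Cmod (z n) <= Cmod (z (n + d)%nat).
Proof.
  intros Hz Hprev.
  set (low := (if (d <=? n)%nat then b (n - d)%nat * z (n - d)%nat else 0)%C).
  assert (Hlow : Cmod low <= lag d b n * Cmod (z n)).
  { unfold low, lag. destruct (Nat.leb_spec d n).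
    - rewrite Cmod_RtoC_mult by apply b_nonneg. apply Rmult_le_compat_l; auto.
    - rewrite Cmod_0. lra. }
  assert (Hdiag : (g n * z n = - (xi * low + Cconj xi * (b n * z (n + d)%nat)))%C).
  { unfold band_op in Hz. fold low in Hz. rewrite <- (Cplus_0_l (- _)%C), <- Hz. ring. }
  pose proof (Cmod_ge_0 xi). pose proof (Cmod_ge_0 (z n)). pose proof (Cmod_ge_0 (z (n + d)%nat)).
  pose proof (b_nonneg n). pose proof (g_dominant n).
  assert (Hlag : 0 <= lag d b n) by (unfold lag; destruct (d <=? n)%nat; [apply b_nonneg | lra]).
  assert (Hbound : g n * Cmod (z n)
                   <= Cmod xi * (lag d b n * Cmod (z n)) + Cmod xi * (b n * Cmod (z (n + d)%nat))).
  { rewrite <- Cmod_RtoC_mult by nra. rewrite Hdiag, Cmod_opp.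
    eapply Rle_trans; [apply Cmod_triangle|].
    rewrite !Cmod_mult, Cmod_conj, Cmod_R, Rabs_pos_eq by apply b_nonneg.
    apply Rplus_le_compat_r, Rmult_le_compat_l; auto. }
  destruct (Rle_or_lt (Cmod (z n)) (Cmod (z (n + d)%nat))) as [Hle | Hlt]; [exact Hle|].
  assert (Cmod xi * b n * Cmod (z (n + d)%nat) <= Cmod xi * b n * Cmod (z n))
    by (apply Rmult_le_compat_l; nra).
  nra.
Qed.

Lemma band_op_l2_kernel z : (1 <= d)%nat -> l2 z -> (forall n, band_op d b xi g z n = 0%C) ->
  forall n, z n = 0%C.
Proof.
  intros Hd Hz H0.
  assert (Hstep : forall n, Cmod (z n) <= Cmod (z (n + d)%nat)).
  { intros n. induction n as [n IH] using lt_wf_ind. apply band_op_kernel_step; [apply H0|].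
    intros Hn. specialize (IH (n - d)%nat ltac:(lia)).
    replace (n - d + d)%nat with n in IH by lia. exact IH. }
  assert (Hchain : forall n j, Cmod (z n) <= Cmod (z (n + j * d)%nat)).
  { intros n j. induction j as [|j IH]; [rewrite Nat.add_0_r; lra|].
    eapply Rle_trans; [exact IH|]. replace (n + S j * d)%nat with (n + j * d + d)%nat by lia. apply Hstep. }
  intros n. apply Cmod_eq_0.
  destruct (Rle_lt_or_eq_dec 0 (Cmod (z n)) (Cmod_ge_0 _)) as [Hpos | <-]; [exfalso | reflexivity].
  assert (He : 0 < Cmod (z n) ^ 2) by (apply pow_lt, Hpos).
  pose proof (ex_series_lim_0 _ Hz) as Hlim. apply is_lim_seq_spec in Hlim.
  destruct (Hlim (mkposreal _ He)) as [J HJ]. specialize (HJ (n + J * d)%nat ltac:(nia)). simpl in HJ.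
  rewrite Rminus_0_r, Rabs_pos_eq in HJ by apply pow2_ge_0.
  assert (Cmod (z n) ^ 2 <= Cmod (z (n + J * d)%nat) ^ 2) by (apply pow_incr; split; [lra | apply Hchain]).
  lra.
Qed.

End Band.

(** * Essential self-adjointness under row dominance *)

Definition delta (n0 : nat) : vec := fun n => if Nat.eqb n n0 then 1%C else 0%C.

Lemma delta_vanishes n0 : vanishes_from (delta n0) (S n0).
Proof. intros n Hn. unfold delta. destruct (Nat.eqb_spec n n0); [lia | reflexivity]. Qed.

Lemma csum_delta (z : nat -> C) n0 K : (n0 < K)%nat -> csum (fun m => z m * delta n0 m)%C K = z n0.
Proof.
  intros HK. unfold csum.
  rewrite !(fsum_single _ n0) by (intros m Hm; unfold delta; destruct (Nat.eqb_spec m n0); [lia|];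
                                 destruct (z m); unfold Re, Im; simpl; ring).
  destruct (Nat.ltb_spec n0 K); [|lia]. unfold delta. rewrite Nat.eqb_refl.
  destruct (z n0). unfold Re, Im. simpl. f_equal; ring.
Qed.

Lemma inner_delta u n0 : inner u (delta n0) = Cconj (u n0).
Proof. rewrite (inner_vanishes u _ (S n0) (delta_vanishes n0)), csum_delta by lia. reflexivity. Qed.

Lemma inner_band_op_delta d b xi g u n0 :
  inner u (band_op d b xi g (delta n0)) = Cconj (band_op d b xi g u n0).
Proof.
  rewrite (inner_vanishes u _ (S n0 + d) (band_op_vanishes d b xi g _ _ (delta_vanishes n0))).
  rewrite (band_op_symmetric d b xi g u _ _ (delta_vanishes n0)), csum_delta by lia. reflexivity.
Qed.

Section BandGraph.

Variables (d : nat) (b : nat -> R) (xi : C) (f : nat -> R).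

Let G := band_graph d b xi f.

Lemma closure_band_graph_D0 x : D0 x -> closure G x (band_op d b xi f x).
Proof.
  intros Hx. split; [apply D0_l2, Hx|]. split; [apply D0_l2, D0_band_op, Hx|].
  exists (fun _ => x), (fun _ => band_op d b xi f x).
  split; [intros j; split; auto | split; apply converges_const].
Qed.

Lemma adjoint_band_graph_formal v w : adjoint (closure G) v w -> forall n, w n = band_op d b xi f v n.
Proof.
  intros [_ [_ Hadj]] n0.
  specialize (Hadj _ _ (closure_band_graph_D0 (delta n0) (ex_intro _ (S n0) (delta_vanishes n0)))).
  rewrite inner_band_op_delta, inner_delta in Hadj.
  rewrite <- (Cconj_conj (w n0)), <- Hadj. apply Cconj_conj.
Qed.

Lemma closure_sub_adjoint_band_graph v w : closure G v w -> adjoint (closure G) v w.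
Proof.
  intros [Hv [Hw [vs [ws [Hgraph [Hvs Hws]]]]]].
  assert (Hvs_l2 : forall j, l2 (vs j)) by (intros j; apply D0_l2, (Hgraph j)).
  assert (Hws_l2 : forall j, l2 (ws j))
    by (intros j; destruct (Hgraph j) as [Hx ->]; apply D0_l2, D0_band_op, Hx).
  assert (Hform : forall x, D0 x -> inner v (band_op d b xi f x) = inner w x).
  { intros x [M Hx].
    rewrite (inner_vanishes v _ (M + d) (band_op_vanishes d b xi f x M Hx)).
    rewrite (inner_vanishes w x (M + d) (vanishes_from_mono x M (M + d) (Nat.le_add_r M d) Hx)).
    apply (clim_unique (fun j => csum (fun m => Cconj (vs j m) * band_op d b xi f x m)%C (M + d))).
    - apply csum_lim. intros m. apply clim_mult_r, clim_conj, converges_clim; auto.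
    - eapply clim_ext; [|apply csum_lim; intros m; apply clim_mult_r, clim_conj, (converges_clim ws); auto].
      intros j. simpl. rewrite (band_op_symmetric d b xi f (vs j) x M Hx).
      destruct (Hgraph j) as [_ ->]. reflexivity. }
  split; [exact Hv|]. split; [exact Hw|].
  intros x y [Hx [Hy [xs [ys [Hgraph' [Hxs Hys]]]]]].
  assert (Hxs_l2 : forall i, l2 (xs i)) by (intros i; apply D0_l2, (Hgraph' i)).
  apply (clim_unique (fun i => inner v (ys i))).
  - apply inner_lim; auto. intros i. destruct (Hgraph' i) as [Hxi ->]. apply D0_l2, D0_band_op, Hxi.
  - eapply clim_ext; [|apply (inner_lim w xs x); auto].
    intros i. destruct (Hgraph' i) as [Hxi ->]. symmetry. apply Hform, Hxi.
Qed.

End BandGraph.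

Section Dominated.

Variables (d : nat) (b : nat -> R) (xi : C).
Hypothesis d_pos : (1 <= d)%nat.
Hypothesis b_nonneg : forall n, 0 <= b n.

Lemma band_range_dense g : (forall n, Cmod xi * (b n + lag d b n) + 1 <= g n) ->
  forall h, l2 h ->
  exists xs : nat -> vec, (forall j, D0 (xs j)) /\ converges (fun j => band_op d b xi g (xs j)) h.
Proof.
  intros Hg h Hh.
  set (range := fun y => exists x, D0 x /\ y = band_op d b xi g x).
  destruct (dense_of_orthogonal_trivial range) with (h := h) as [ys [HyS Hys]]; auto.
  - intros y [x [Hx ->]]. apply D0_band_op, Hx.
  - exists (fun _ => 0%C). split; [exists O; intros n _; reflexivity|].
    apply functional_extensionality. intros n. unfold band_op. destruct (d <=? n)%nat; ring.
  - intros a1 a2 y z [x [Hx ->]] [x' [Hx' ->]]. exists (fun n => a1 * x n + a2 * x' n)%C. split.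
    + destruct Hx as [M HM], Hx' as [M' HM']. exists (Nat.max M M'). intros n Hn.
      rewrite HM, HM' by lia. ring.
    + apply functional_extensionality. intros n. symmetry. apply band_op_lin.
  - intros r Hr Hperp. apply (band_op_l2_kernel d b xi b_nonneg g Hg r d_pos Hr). intros n0.
    rewrite <- (Cconj_conj (band_op d b xi g r n0)), <- inner_band_op_delta, Hperp.
    + apply injective_projections; simpl; ring.
    + exists (delta n0). split; [exists (S n0); apply delta_vanishes | reflexivity].
  - destruct (functional_choice (fun j x => D0 x /\ ys j = band_op d b xi g x)) as [xs Hxs]; [exact HyS|].
    exists xs. split; [intros j; apply Hxs|].
    eapply is_lim_seq_ext; [|exact Hys]. intros j. simpl. destruct (Hxs j) as [_ ->]. reflexivity.
Qed.

Lemma band_op_preimage_converges g (xs : nat -> vec) h v :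
  (forall n, Cmod xi * (b n + lag d b n) + 1 <= g n) ->
  (forall j, D0 (xs j)) -> l2 h -> l2 v -> (forall n, band_op d b xi g v n = h n) ->
  converges (fun j => band_op d b xi g (xs j)) h -> converges xs v.
Proof.
  intros Hg Hxs Hh Hv Hvh Hconv.
  set (T := band_op d b xi g).
  assert (HTxs : forall j, l2 (T (xs j))) by (intros j; apply D0_l2, D0_band_op, Hxs).
  assert (Hcauchy : l2_cauchy xs).
  { apply (l2_cauchy_of_le _ _ Hconv). intros i j.
    destruct (Hxs i) as [Mi Hi], (Hxs j) as [Mj Hj].
    assert (Hij : vanishes_from (fun n => xs i n - xs j n)%C (Nat.max Mi Mj))
      by (intros n Hn; rewrite Hi, Hj by lia; ring).
    eapply Rle_trans; [apply (band_op_coercive d b xi b_nonneg g Hg _ _ Hij)|].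
    rewrite (nrm2_ext _ (fun n => (T (xs i) n - h n) - (T (xs j) n - h n))%C)
      by (intros n; rewrite band_op_minus; fold T; ring).
    apply nrm2_minus_le; apply l2_minus; auto. }
  destruct (l2_complete xs) as [u [Hu Hxu]]; [intros j; apply D0_l2, Hxs | exact Hcauchy|].
  assert (HTu : forall n, T u n = h n).
  { intros n. apply (clim_unique (fun j => T (xs j) n)).
    - apply band_op_clim, (converges_clim xs u); auto. intros j; apply D0_l2, Hxs.
    - apply (converges_clim (fun j => T (xs j)) h); auto. }
  assert (Huv : forall n, (u n - v n)%C = 0%C).
  { apply (band_op_l2_kernel d b xi b_nonneg g Hg); auto; [apply l2_minus; auto|].
    intros n. rewrite band_op_minus. fold T. rewrite HTu, Hvh. ring. }
  eapply is_lim_seq_ext; [|exact Hxu]. intros j. apply nrm2_ext. intros n.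
  replace (v n) with (u n - (u n - v n))%C by ring. rewrite Huv. f_equal. ring.
Qed.

Lemma adjoint_sub_closure_band_graph f (c0 : R) v w :
  (forall n, Cmod xi * (b n + lag d b n) + 1 <= f n + c0) ->
  adjoint (closure (band_graph d b xi f)) v w -> closure (band_graph d b xi f) v w.
Proof.
  intros Hdom Hadj.
  pose proof (adjoint_band_graph_formal d b xi f v w Hadj) as Hformal. destruct Hadj as [Hv [Hw _]].
  set (g := fun n => f n + c0). set (T := band_op d b xi g).
  set (h := fun n => (w n + c0 * v n)%C).
  assert (Hh : l2 h) by (apply l2_plus; [exact Hw | apply l2_scal, Hv]).
  assert (HT : forall x n, T x n = (band_op d b xi f x n + c0 * x n)%C)
    by (intros; apply band_op_diag_shift).
  destruct (band_range_dense g Hdom h Hh) as [xs [Hxs HTxs]]. fold T in HTxs.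
  assert (Hxv : converges xs v).
  { apply (band_op_preimage_converges g xs h v Hdom Hxs Hh Hv); [|exact HTxs].
    intros n. rewrite HT. unfold h. rewrite Hformal. reflexivity. }
  split; [exact Hv|]. split; [exact Hw|].
  exists xs, (fun j => band_op d b xi f (xs j)). split; [intros j; split; [apply Hxs | reflexivity]|].
  split; [exact Hxv|].
  assert (Hlim := converges_sub_scal (fun j => T (xs j)) xs h v c0).
  eapply is_lim_seq_ext; [|apply Hlim; auto; intros j; apply D0_l2; [apply D0_band_op|]; apply Hxs].
  intros j. apply nrm2_ext. intros n. simpl. rewrite HT. unfold h. ring.
Qed.

End Dominated.

Theorem band_graph_essentially_self_adjoint d b xi f (c0 : R) :
  (1 <= d)%nat -> (forall n, 0 <= b n) ->
  (forall n, Cmod xi * (b n + lag d b n) + 1 <= f n + c0) ->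
  essentially_self_adjoint (band_graph d b xi f).
Proof.
  intros Hd Hb Hdom v w. split.
  - apply closure_sub_adjoint_band_graph.
  - apply (adjoint_sub_closure_band_graph d b xi Hd Hb f c0 v w Hdom).
Qed.

(** * The operator A *)

Fixpoint rising (x s : nat) : R := match s with O => 1 | S s' => INR x * rising (S x) s' end.

Fixpoint falling (n k : nat) : R := match k with O => 1 | S k' => INR n * falling (n - 1) k' end.

Lemma rising_nonneg x s : 0 <= rising x s.
Proof.
  revert x. induction s as [|s IH]; intros x; simpl; [lra|].
  apply Rmult_le_pos; [apply pos_INR | apply IH].
Qed.

Lemma falling_nonneg n k : 0 <= falling n k.
Proof.
  revert n. induction k as [|k IH]; intros n; simpl; [lra|].
  apply Rmult_le_pos; [apply pos_INR | apply IH].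
Qed.

Lemma rising_S_r x s : rising x (S s) = rising x s * INR (x + s).
Proof.
  revert x. induction s as [|s IH]; intros x.
  - simpl. rewrite Nat.add_0_r. ring.
  - change (rising x (S (S s))) with (INR x * rising (S x) (S s)). rewrite IH.
    replace (S x + s)%nat with (x + S s)%nat by lia. simpl. ring.
Qed.

Lemma rising_mono x y s : (x <= y)%nat -> rising x s <= rising y s.
Proof.
  revert x y. induction s as [|s IH]; intros x y Hxy; simpl; [lra|].
  apply Rmult_le_compat; [apply pos_INR | apply rising_nonneg | apply le_INR, Hxy | apply IH; lia].
Qed.

Lemma falling_rising n k : (k <= n)%nat -> falling n k = rising (n - k + 1) k.
Proof.
  revert n. induction k as [|k IH]; intros n Hk; [reflexivity|].
  change (falling n (S k)) with (INR n * falling (n - 1) k).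
  rewrite IH, rising_S_r by lia.
  replace (n - 1 - k + 1)%nat with (n - S k + 1)%nat by lia.
  replace (n - S k + 1 + k)%nat with n by lia. ring.
Qed.

Lemma iter_a_op l u m : Nat.iter l a_op u m = (sqrt (rising (S m) l) * u (m + l)%nat)%C.
Proof.
  revert m. induction l as [|l IH]; intros m.
  - simpl. rewrite sqrt_1, Nat.add_0_r. ring.
  - change (Nat.iter (S l) a_op u m) with (a_op (Nat.iter l a_op u) m). unfold a_op. rewrite IH.
    change (rising (S m) (S l)) with (INR (S m) * rising (S (S m)) l).
    rewrite sqrt_mult by (apply pos_INR || apply rising_nonneg).
    replace (S m + l)%nat with (m + S l)%nat by lia. rewrite RtoC_mult. ring.
Qed.

Lemma iter_adag_op k u n : Nat.iter k adag_op u n =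
  if (k <=? n)%nat then (sqrt (falling n k) * u (n - k)%nat)%C else 0%C.
Proof.
  revert n. induction k as [|k IH]; intros n.
  - simpl. rewrite sqrt_1, Nat.sub_0_r. ring.
  - destruct n as [|m]; [reflexivity|].
    change (Nat.iter (S k) adag_op u (S m)) with (adag_op (Nat.iter k adag_op u) (S m)).
    unfold adag_op at 1. cbv beta iota. rewrite IH. simpl (S k <=? S m)%nat.
    destruct (k <=? m)%nat; [|ring].
    change (falling (S m) (S k)) with (INR (S m) * falling (S m - 1) k).
    replace (S m - 1)%nat with m by lia. simpl (S m - S k)%nat.
    rewrite sqrt_mult by (apply pos_INR || apply falling_nonneg). rewrite RtoC_mult. ring.
Qed.

Lemma poch_of_nat x s : poch (Z.of_nat x) s = rising x s.
Proof.
  unfold poch. destruct (Z.ltb_spec (Z.of_nat x) 0); [lia|].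
  assert (Hfold : forall j, List.fold_right Rmult 1
            (List.map (fun i => IZR (Z.of_nat x + Z.of_nat i)) (List.seq j s)) = rising (x + j) s).
  { induction s as [|s IH]; intros j; [reflexivity|]. simpl. rewrite IH.
    rewrite <- Nat2Z.inj_add, <- INR_IZR_INZ. replace (x + S j)%nat with (S (x + j)) by lia. reflexivity. }
  rewrite Hfold, Nat.add_0_r. reflexivity.
Qed.

Lemma poch_nonneg x s : 0 <= poch x s.
Proof.
  destruct (Z.ltb_spec x 0) as [Hx|Hx].
  - unfold poch. apply Z.ltb_lt in Hx. rewrite Hx. lra.
  - replace x with (Z.of_nat (Z.to_nat x)) by lia. rewrite poch_of_nat. apply rising_nonneg.
Qed.

Lemma poch_mono x y s : (x <= y)%Z -> poch x s <= poch y s.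
Proof.
  intros Hxy. destruct (Z.ltb_spec x 0) as [Hx|Hx].
  - unfold poch at 1. apply Z.ltb_lt in Hx. rewrite Hx. apply poch_nonneg.
  - replace x with (Z.of_nat (Z.to_nat x)) by lia. replace y with (Z.of_nat (Z.to_nat y)) by lia.
    rewrite !poch_of_nat. apply rising_mono. lia.
Qed.

Lemma beta_nonneg k l x : 0 <= beta k l x.
Proof. apply sqrt_pos. Qed.

Lemma beta_mono k l x y : (x <= y)%Z -> beta k l x <= beta k l y.
Proof. intros Hxy. apply sqrt_le_1_alt, Rmult_le_compat; try apply poch_nonneg; apply poch_mono; lia. Qed.

Lemma beta_of_nat k l m : (l <= m)%nat ->
  beta k l (Z.of_nat m) = sqrt (rising (m - l + 1) l * rising (m - l + 1) k).
Proof.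
  intros Hm. unfold beta. replace (Z.of_nat m - Z.of_nat l + 1)%Z with (Z.of_nat (m - l + 1)) by lia.
  rewrite !poch_of_nat. reflexivity.
Qed.

Lemma beta_below k l m : (1 <= k)%nat -> (m < l)%nat -> beta k l (Z.of_nat m) = 0.
Proof.
  intros Hk Hm. unfold beta.
  destruct (Z.eq_dec (Z.of_nat m - Z.of_nat l + 1) 0) as [E|E].
  - rewrite E. change 0%Z with (Z.of_nat 0). rewrite !poch_of_nat.
    destruct k as [|k]; [lia|]. simpl. rewrite Rmult_0_l, Rmult_0_r. apply sqrt_0.
  - unfold poch at 1. destruct (Z.ltb_spec (Z.of_nat m - Z.of_nat l + 1) 0); [|lia].
    rewrite Rmult_0_l. apply sqrt_0.
Qed.

Section Ladder.

Variables (k l : nat).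
Hypothesis l_lt_k : (l < k)%nat.

Let bk (n : nat) : R := beta k l (Z.of_nat n).

Lemma raising_term u n : Nat.iter k adag_op (Nat.iter l a_op u) n
  = (if (k - l <=? n)%nat then bk (n - (k - l))%nat * u (n - (k - l))%nat else 0)%C.
Proof.
  unfold bk. rewrite iter_adag_op.
  destruct (Nat.leb_spec k n), (Nat.leb_spec (k - l) n); try lia.
  - rewrite iter_a_op, beta_of_nat by lia.
    replace (n - k + l)%nat with (n - (k - l))%nat by lia.
    replace (n - (k - l) - l + 1)%nat with (S (n - k)) by lia.
    rewrite falling_rising, (sqrt_mult (rising _ l)) by (lia || apply rising_nonneg).
    replace (n - k + 1)%nat with (S (n - k)) by lia. rewrite RtoC_mult. ring.
  - rewrite beta_below by lia. ring.
  - reflexivity.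
Qed.

Lemma lowering_term u n : Nat.iter l adag_op (Nat.iter k a_op u) n = (bk n * u (n + (k - l))%nat)%C.
Proof.
  unfold bk. rewrite iter_adag_op. destruct (Nat.leb_spec l n).
  - rewrite iter_a_op, beta_of_nat by lia.
    replace (n - l + k)%nat with (n + (k - l))%nat by lia.
    rewrite falling_rising, (sqrt_mult (rising _ l)) by (lia || apply rising_nonneg).
    replace (n - l + 1)%nat with (S (n - l)) by lia. rewrite RtoC_mult. ring.
  - rewrite beta_below by lia. ring.
Qed.

Lemma A_op_band xi f : A_op k l xi f = band_op (k - l) bk xi f.
Proof.
  apply functional_extensionality. intros u. apply functional_extensionality. intros n.
  unfold A_op, band_op. rewrite raising_term, lowering_term. reflexivity.
Qed.

End Ladder.

Lemma beta_row_bound k l (xi : C) (f : nat -> R) (kappa : R) (N : nat) :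
  (forall n, 0 <= f n) -> 2 <= kappa ->
  (forall n : nat, (N <= n)%nat -> f n >= kappa * Cmod xi * beta k l (Z.of_nat n)) ->
  forall n, Cmod xi * (beta k l (Z.of_nat n) + lag (k - l) (fun m => beta k l (Z.of_nat m)) n)
            <= f n + 2 * Cmod xi * beta k l (Z.of_nat N - 1).
Proof.
  intros Hf Hkappa HN n.
  assert (Hlag : 0 <= lag (k - l) (fun m => beta k l (Z.of_nat m)) n <= beta k l (Z.of_nat n)).
  { unfold lag. destruct (Nat.leb_spec (k - l) n); split; try apply beta_nonneg; try lra.
    apply beta_mono. lia. }
  pose proof (Cmod_ge_0 xi). pose proof (beta_nonneg k l (Z.of_nat n)).
  pose proof (beta_nonneg k l (Z.of_nat N - 1)). specialize (Hf n).
  destruct (Nat.leb_spec N n) as [HNn | HnN].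
  - specialize (HN n HNn).
    assert (Cmod xi * lag (k - l) (fun m => beta k l (Z.of_nat m)) n <= Cmod xi * beta k l (Z.of_nat n))
      by (apply Rmult_le_compat_l; lra).
    assert (2 * (Cmod xi * beta k l (Z.of_nat n)) <= kappa * (Cmod xi * beta k l (Z.of_nat n)))
      by (apply Rmult_le_compat_r; [apply Rmult_le_pos|]; lra).
    nra.
  - assert (beta k l (Z.of_nat n) <= beta k l (Z.of_nat N - 1)) by (apply beta_mono; lia). nra.
Qed.

Theorem proposition3p5 (k l : nat) (xi : C) (f : nat -> R)
  (kappa : R) (N : nat) :
  (l < k)%nat ->
  (forall n, 0 <= f n) ->
  2 <= kappa ->
  (forall n : nat, (N <= n)%nat -> f n >= kappa * Cmod xi * beta k l (Z.of_nat n)) ->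
  essentially_self_adjoint (graph_of_A k l xi f) /\
  (2 < kappa -> forall psi : vec, D0 psi ->
     Im (inner psi (A_op k l xi f psi)) = 0 /\
     Re (inner psi (A_op k l xi f psi)) >=
       - (2 * Cmod xi * beta k l (Z.of_nat N - 1) * kappa / (kappa - 2)) * nrm2 psi).
Proof.
  intros Hlk Hf Hkappa HN.
  set (c := 2 * Cmod xi * beta k l (Z.of_nat N - 1)).
  pose proof (beta_row_bound k l xi f kappa N Hf Hkappa HN) as Hrow. fold c in Hrow.
  assert (Hb : forall n, 0 <= beta k l (Z.of_nat n)) by (intros; apply beta_nonneg).
  split.
  - replace (graph_of_A k l xi f) with (band_graph (k - l) (fun n => beta k l (Z.of_nat n)) xi f)
      by (unfold graph_of_A, band_graph; rewrite (A_op_band k l Hlk); reflexivity).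
    apply (band_graph_essentially_self_adjoint _ _ _ f (c + 1)); [lia | exact Hb|].
    intros n. specialize (Hrow n). lra.
  - intros Hkappa2 psi Hpsi. rewrite (A_op_band k l Hlk).
    destruct (band_op_quadratic_form _ _ xi Hb f c psi Hrow Hpsi) as [Him Hre].
    split; [exact Him|].
    assert (Hc : 0 <= c)
      by (unfold c; pose proof (Cmod_ge_0 xi); pose proof (beta_nonneg k l (Z.of_nat N - 1)); nra).
    assert (c <= c * kappa / (kappa - 2)).
    { apply Rmult_le_reg_r with (kappa - 2); [lra|]. unfold Rdiv. rewrite Rmult_assoc, Rinv_l by lra. nra. }
    pose proof (nrm2_nonneg psi (D0_l2 psi Hpsi)). fold c. nra.
Qed.
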